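(* Let $m\geq 2$ and $n\geq 3$ be integers. The Drazin index of the adjacency matrix of the oriented Dutch windmill graph $D^m_n$ is $n-1$.
   Context: For integers $m\geq 1$, $n\geq 3$, the oriented Dutch windmill graph $D^m_n$ is the directed graph with vertex set $V=\{1,2,\ldots,m(n-1)+1\}$ whose directed edges $(a,b)$ are exactly: $(1,(k-1)(n-1)+2)$ for $k\in\{1,\ldots,m\}$; $((k-1)(n-1)+i,(k-1)(n-1)+i+1)$ for $k\in\{1,\ldots,m\}$ and $i\in\{2,\ldots,n-1\}$; and $((k-1)(n-1)+n,1)$ for $k\in\{1,\ldots,m\}$. Its adjacency matrix $M=(a_{ij})$ has $a_{ij}=1$ if $(i,j)$ is an edge and $0$ otherwise. The Drazin index $\operatorname{ind}(A)$ of a square matrix $A$ is the least nonnegative integer $k$ such that there is a matrix $X$ with $A^{k+1}X=A^k$, $XAX=X$, $AX=XA$; equivalently, the multiplicity of $0$ as a root of the minimal polynomial of $A$. *)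

From HB Require Import structures.
From mathcomp Require Import all_boot all_order all_algebra.
Set Implicit Arguments. Unset Strict Implicit. Unset Printing Implicit Defensive.
Import Order.TTheory GRing.Theory Num.Theory.
Local Open Scope ring_scope.

(* Directed edge relation of the oriented Dutch windmill graph D^m_n,
   on vertices numbered 1 .. m(n-1)+1 exactly as in the paper. *)
Definition dw_edge (m n a b : nat) : bool :=
  has (fun k => (a == 1)%N && (b == (k - 1) * (n - 1) + 2)%N) (iota 1 m)
  || has (fun k => has (fun i => (a == (k - 1) * (n - 1) + i)%N
                              && (b == (k - 1) * (n - 1) + i + 1)%N)
                       (iota 2 (n - 2))) (iota 1 m)
  || has (fun k => (a == (k - 1) * (n - 1) + n)%N && (b == 1)%N) (iota 1 m).

(* Adjacency matrix; row/column index i : 'I_N stands for vertex i+1. *)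
Definition dw_adj (R : pzRingType) (m n : nat) : 'M[R]_((m * (n - 1))%N.+1) :=
  \matrix_(i, j) (dw_edge m n i.+1 j.+1)%:R.

Definition drazin_at (R : pzRingType) (N : nat) (A : 'M[R]_N) (k : nat) : Prop :=
  exists X : 'M[R]_N,
    [/\ A ^+ k.+1 *m X = A ^+ k, X *m A *m X = X & A *m X = X *m A].

Definition drazin_index_is (R : pzRingType) (N : nat) (A : 'M[R]_N) (k : nat) : Prop :=
  drazin_at A k /\ forall j, drazin_at A j -> (k <= j)%N.

From mathcomp Require Import all_boot all_order all_algebra zify.
Set Implicit Arguments. Unset Strict Implicit. Unset Printing Implicit Defensive.
Import Order.TTheory GRing.Theory Num.Theory.
Local Open Scope ring_scope.

(* Index the vertices from [0], as the matrix does: the hub is [0] and index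
   [c * d + q], with [d = n - 1], [c < m] and [1 <= q <= d], is the [q]-th
   vertex of blade [c].  Following the edges backwards, [A] maps the basis
   vector of a blade vertex to its predecessor, and the basis vector of the hub
   to the sum of the last vertices of all blades.  Hence [A^(d+1)] fixes the hub
   vector up to the factor [m], and [A^r] sends any basis vector to the hub
   vector for some [r <= d]; together these give [A^(2d+1) = m A^d], so
   [X = A^d / m] is a Drazin inverse at level [d].  For [j < d] the vector
   [e_(0, j+1) - e_(1, j+1)] lies in the kernel of [A^(j+1)] but not of [A^j],
   which no Drazin inverse at level [j] allows. *)

Section SquareMatrices.
Variables (R : pzRingType) (N : nat).
Implicit Types A : 'M[R]_N.

Definition evec (t : nat) : 'cV[R]_N := \col_(i < N) ((i : nat) == t)%:R.

Lemma evec_col (M : 'M[R]_N) (j : 'I_N) : M *m evec j = col j M.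
Proof.
apply/matrixP => i k; rewrite ord1 !mxE (bigD1 j) //= !mxE eqxx mulr1.
rewrite big1 ?addr0 // => j' ne_j'j; rewrite !mxE.
by rewrite -[_ == _]/(j' == j) (negbTE ne_j'j) mulr0.
Qed.

Lemma matrix_evecP (M M' : 'M[R]_N) :
  (forall j : 'I_N, M *m evec j = M' *m evec j) -> M = M'.
Proof.
move=> eqMM'; apply/matrixP => i j.
by have /matrixP/(_ i 0) := eqMM' j; rewrite !evec_col !mxE.
Qed.

Lemma mulmx_exprD (M : 'M[R]_N) a b (v : 'cV[R]_N) :
  M ^+ (a + b) *m v = M ^+ a *m (M ^+ b *m v).
Proof. by rewrite exprD -mulmxE mulmxA. Qed.

Lemma drazin_at_kernel A k p (v : 'M[R]_(N, p)) :
  drazin_at A k -> A ^+ k.+1 *m v = 0 -> A ^+ k *m v = 0.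
Proof.
case=> X [AkX _ cAX] Akv.
have cAkX : GRing.comm (A ^+ k.+1) X.
  by apply/commr_sym/commrX; rewrite /GRing.comm -!mulmxE.
by rewrite -AkX mulmxE cAkX -mulmxE -mulmxA Akv mulmx0.
Qed.

Lemma drazin_index_is_intro A k :
  drazin_at A k ->
  (forall j, (j < k)%N ->
     exists v : 'cV[R]_N, A ^+ j.+1 *m v = 0 /\ A ^+ j *m v != 0) ->
  drazin_index_is A k.
Proof.
move=> Ak gap; split=> // j Aj; rewrite leqNgt; apply/negP => /gap[v [Av0]].
by rewrite (drazin_at_kernel Aj Av0) eqxx.
Qed.

End SquareMatrices.

Arguments evec {R N}.

Lemma drazin_at_pow_scale (R : comUnitRingType) N (A : 'M[R]_N) k (c : R) :
  c \is a GRing.unit -> A ^+ (k.+1 + k) = c *: A ^+ k -> drazin_at A k.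
Proof.
move=> cU Ac; exists (c^-1 *: A ^+ k); split.
- by rewrite -scalemxAr mulmxE -exprD Ac scalerA mulVr ?scale1r.
- rewrite -scalemxAr -!scalemxAl !mulmxE -exprSr -exprD Ac !scalerA.
  by rewrite divrK.
- by rewrite -scalemxAr -scalemxAl !mulmxE -exprS -exprSr.
Qed.

Lemma sum_indicator_inj (R : pzSemiRingType) k (f : 'I_k -> nat) x :
  injective f -> \sum_(c < k) ((x == f c)%:R : R) = [exists c, x == f c]%:R.
Proof.
move=> f_inj; case: existsP => [[c /eqP ->]|no_c].
  rewrite (bigD1 c) //= eqxx big1 ?addr0 // => c' /negbTE.
  by rewrite eq_sym (inj_eq f_inj) => ->.
by rewrite big1 // => c _; case: eqP => // fc; case: no_c; exists c; apply/eqP.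
Qed.

Lemma blade_inj d c1 c2 q1 q2 :
  (0 < q1 <= d)%N -> (0 < q2 <= d)%N -> (c1 * d + q1 = c2 * d + q2)%N ->
  c1 = c2 /\ q1 = q2.
Proof.
move=> /andP[q1_gt0 q1_le] /andP[q2_gt0 q2_le] E.
suff c12 : c1 = c2 by split=> //; subst; lia.
case: (ltngtP c1 c2) => // lt_c.
- have : (c1.+1 * d <= c2 * d)%N by rewrite leq_mul2r lt_c orbT.
  by rewrite mulSn; lia.
- have : (c2.+1 * d <= c1 * d)%N by rewrite leq_mul2r lt_c orbT.
  by rewrite mulSn; lia.
Qed.

Section WindmillEdges.
Variables (m n : nat).
Hypothesis n_ge2 : (2 <= n)%N.
Local Notation d := (n - 1)%N.

Lemma blade_lt c q : (c < m)%N -> (q <= d)%N -> (c * d + q < (m * d).+1)%N.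
Proof.
move=> lt_cm le_qd; have : (c.+1 * d <= m * d)%N by rewrite leq_mul2r lt_cm orbT.
by rewrite mulSn; lia.
Qed.

Lemma dw_edgeP a b : dw_edge m n a b <->
  [\/ exists2 c, (c < m)%N & a = 1%N /\ b = (c * d + 2)%N,
      exists c p, [/\ (c < m)%N, (2 <= p < n)%N, a = (c * d + p)%N
                    & b = (c * d + p + 1)%N]
    | exists2 c, (c < m)%N & a = (c * d + n)%N /\ b = 1%N].
Proof.
rewrite /dw_edge; split.
- case/orP => [/orP[]|].
  + case/hasP => k; rewrite mem_iota => /andP[k1 k2] /andP[/eqP -> /eqP ->].
    by apply: Or31; exists (k - 1)%N => //; lia.
  + case/hasP => k; rewrite mem_iota => /andP[k1 k2] /hasP[i].
    rewrite mem_iota => /andP[i1 i2] /andP[/eqP -> /eqP ->].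
    by apply: Or32; exists (k - 1)%N, i; split => //; lia.
  + case/hasP => k; rewrite mem_iota => /andP[k1 k2] /andP[/eqP -> /eqP ->].
    by apply: Or33; exists (k - 1)%N => //; lia.
- case=> [[c lt_cm [-> ->]]|[c [p [lt_cm hp -> ->]]]|[c lt_cm [-> ->]]].
  + apply/orP; left; apply/orP; left; apply/hasP; exists c.+1.
      by rewrite mem_iota; lia.
    by apply/andP; split; apply/eqP; lia.
  + apply/orP; left; apply/orP; right; apply/hasP; exists c.+1.
      by rewrite mem_iota; lia.
    apply/hasP; exists p; first by rewrite mem_iota; lia.
    by apply/andP; split; apply/eqP; lia.
  + apply/orP; right; apply/hasP; exists c.+1; first by rewrite mem_iota; lia.
    by apply/andP; split; apply/eqP; lia.
Qed.

Lemma dw_edge_into_hub a :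
  dw_edge m n a.+1 1 = [exists c : 'I_m, a == c * d + d]%N.
Proof.
apply/idP/existsP.
- case/dw_edgeP=> [[c _ [_ E]]|[c [p [_ hp _ E]]]|[c lt_cm [E _]]];
    try (exfalso; nia).
  by exists (Ordinal lt_cm); apply/eqP => /=; nia.
- by case=> c /eqP ->; apply/dw_edgeP/Or33; exists c => //; nia.
Qed.

Lemma dw_edge_into_blade_start a c :
  (c < m)%N -> dw_edge m n a.+1 (c * d + 1).+1 = (a == 0)%N.
Proof.
move=> lt_cm; apply/idP/eqP.
- case/dw_edgeP=> [[c' _ [E _]]|[c' [p [_ hp _ E]]]|[c' _ [_ E]]]; [nia | | nia].
  by have [] := @blade_inj d c c' 1 p _ _ (_ : c * d + 1 = c' * d + p)%N; nia.
- by move=> ->; apply/dw_edgeP/Or31; exists c => //; nia.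
Qed.

Lemma dw_edge_into_blade_next a c q :
  (c < m)%N -> (1 <= q < d)%N ->
  dw_edge m n a.+1 (c * d + q.+1).+1 = (a == c * d + q)%N.
Proof.
move=> lt_cm hq; apply/idP/eqP.
- case/dw_edgeP=> [[c' _ [_ E]]|[c' [p [_ hp E1 E]]]|[c' _ [_ E]]]; last by nia.
  + by have [] := @blade_inj d c c' q.+1 1 _ _ (_ : c * d + q.+1 = c' * d + 1)%N;
      nia.
  + by have [] := @blade_inj d c c' q.+1 p _ _ (_ : c * d + q.+1 = c' * d + p)%N;
      nia.
- by move=> ->; apply/dw_edgeP/Or32; exists c, q.+1; split => //; nia.
Qed.

End WindmillEdges.

Section WindmillAdjacency.
Variables (R : nzRingType) (m n : nat).
Hypothesis n_ge2 : (2 <= n)%N.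
Local Notation d := (n - 1)%N.
Local Notation N := (m * d).+1.
Local Notation A := (dw_adj R m n).

Lemma dw_adj_evec t :
  (t < N)%N -> A *m evec t = \col_i (dw_edge m n i.+1 t.+1)%:R.
Proof.
move=> lt_tN; rewrite (evec_col _ (Ordinal lt_tN)).
by apply/matrixP => i k; rewrite !mxE.
Qed.

Lemma dw_adj_evec_hub : A *m evec 0 = \sum_(c < m) evec (c * d + d).
Proof.
apply/matrixP => i k; rewrite dw_adj_evec // summxE !mxE dw_edge_into_hub //.
under eq_bigr do rewrite mxE.
by rewrite sum_indicator_inj // => c c' /eqP; rewrite eqn_add2r eqn_pmul2r;
  [move/eqP/val_inj | lia].
Qed.

Lemma dw_adj_evec_blade_start c : (c < m)%N -> A *m evec (c * d + 1) = evec 0.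
Proof.
move=> lt_cm; have lt_tN : (c * d + 1 < N)%N by apply: blade_lt; lia.
by apply/matrixP => i k; rewrite dw_adj_evec // !mxE dw_edge_into_blade_start.
Qed.

Lemma dw_adj_evec_blade_next c q :
  (c < m)%N -> (1 <= q < d)%N -> A *m evec (c * d + q.+1) = evec (c * d + q).
Proof.
move=> lt_cm hq; have lt_tN : (c * d + q.+1 < N)%N by apply: blade_lt; lia.
by apply/matrixP => i k; rewrite dw_adj_evec // !mxE dw_edge_into_blade_next.
Qed.

Lemma dw_adj_pow_evec_blade c q k :
  (c < m)%N -> (1 <= q)%N -> (q + k <= d)%N ->
  A ^+ k *m evec (c * d + (q + k)) = evec (c * d + q).
Proof.
move=> lt_cm q_gt0; elim: k => [|k IHk] le_qkd; first by rewrite addn0 mul1mx.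
rewrite addnS -[k.+1]addn1 mulmx_exprD dw_adj_evec_blade_next //; last by lia.
by rewrite IHk //; lia.
Qed.

Lemma dw_adj_pow_evec_blade_hub c q :
  (c < m)%N -> (1 <= q <= d)%N -> A ^+ q *m evec (c * d + q) = evec 0.
Proof.
move=> lt_cm; case: q => // q le_qd.
rewrite -[q.+1]add1n mulmx_exprD expr1 dw_adj_pow_evec_blade //.
exact: dw_adj_evec_blade_start.
Qed.

Lemma dw_adj_pow_evec_hub : A ^+ d.+1 *m evec 0 = evec 0 *+ m.
Proof.
rewrite -[d.+1]addn1 mulmx_exprD expr1 dw_adj_evec_hub mulmx_sumr.
rewrite (eq_bigr (fun=> evec 0)) ?sumr_const ?card_ord // => c _.
by apply: dw_adj_pow_evec_blade_hub => //; lia.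
Qed.

Lemma dw_adj_reaches_hub t :
  (t < N)%N -> exists2 r, (r <= d)%N & A ^+ r *m evec t = evec 0.
Proof.
case: t => [_|t lt_tN]; first by exists 0%N => //; rewrite expr0 mul1mx.
have d_gt0 : (0 < d)%N by lia.
have lt_cm : (t %/ d < m)%N by rewrite ltn_divLR //; lia.
have le_qd : (t %% d < d)%N by rewrite ltn_mod.
exists (t %% d).+1 => //; rewrite [in evec _](divn_eq t d) -addnS.
exact: dw_adj_pow_evec_blade_hub.
Qed.

Lemma dw_adj_pow_identity : A ^+ (d.+1 + d) = A ^+ d *+ m.
Proof.
apply: matrix_evecP => j; have [r le_rd Ajr] := dw_adj_reaches_hub (ltn_ord j).
have -> : (d.+1 + d = d - r + (d.+1 + r))%N by lia.
rewrite !mulmx_exprD Ajr dw_adj_pow_evec_hub raddfMn /= -Ajr -mulmx_exprD subnK //.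
symmetry; exact: (raddfMn (mulmxr (evec j))).
Qed.

Lemma dw_adj_kernel_gap j : (2 <= m)%N -> (j < d)%N ->
  exists v : 'cV[R]_N, A ^+ j.+1 *m v = 0 /\ A ^+ j *m v != 0.
Proof.
move=> m_ge2 lt_jd.
exists (evec (0 * d + (1 + j)) - evec (1 * d + (1 + j))); split.
  by rewrite mulmxBr !dw_adj_pow_evec_blade_hub ?subrr //; lia.
rewrite mulmxBr !dw_adj_pow_evec_blade //; try lia.
have lt_1N : (1 < N)%N by rewrite ltnS muln_gt0; lia.
apply/eqP => /matrixP/(_ (Ordinal lt_1N) 0); rewrite !mxE /=.
rewrite (_ : (1 == 1 * d + 1)%N = false) ?subr0; last by apply/eqP; lia.
by apply/eqP; exact: oner_neq0.
Qed.

End WindmillAdjacency.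

Theorem theorem3p2 (R : numFieldType) (m n : nat) :
  (2 <= m)%N -> (3 <= n)%N -> drazin_index_is (dw_adj R m n) (n - 1).
Proof.
move=> m_ge2 n_ge3; have n_ge2 : (2 <= n)%N := ltnW n_ge3.
apply: drazin_index_is_intro => [|j lt_jd]; last exact: dw_adj_kernel_gap.
apply: (@drazin_at_pow_scale _ _ _ _ m%:R).
  by rewrite unitfE pnatr_eq0; lia.
by rewrite dw_adj_pow_identity // scaler_nat.
Qed.
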